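(* Let $V=\{1,\dots,p\}$ and $F:2^V\to\mathbb{R}$ be submodular, nondecreasing, with $F(\varnothing)=0$ and $F(\{k\})>0$ for all $k$; let $\Omega(w)=f(|w|)$ with $f$ the Lovász extension of $F$. Let $X\in\mathbb{R}^{n\times p}$ be fixed, $Q=\frac1nX^\top X$, and $y=Xw^\ast+\sigma\varepsilon$ with $w^\ast\in\mathbb{R}^p$, $\sigma>0$, $\varepsilon$ a standard normal vector in $\mathbb{R}^n$. Let $J$ be the smallest stable set containing $\mathrm{Supp}(w^\ast)$. Assume there is $\kappa>0$ such that for all $\Delta\in\mathbb{R}^p$ with $\Omega^J(\Delta_{J^c})\leqslant3\Omega_J(\Delta_J)$ one has $\Delta^\top Q\Delta\geqslant\kappa\|\Delta_J\|_2^2$. Let $\lambda>0$ and let $\hat w$ be a minimizer of $\frac{1}{2n}\|y-Xw\|_2^2+\lambda\Omega(w)$. Then, with probability larger than $1-P\big(\Omega^\ast(z)>\frac{\lambda\rho(J)\sqrt n}{2\sigma}\big)$, where $z$ is a centered multivariate normal vector with covariance $Q$, $$\Omega(\hat w-w^\ast)\leqslant\frac{24c(J)^2\lambda}{\kappa\rho(J)^2}\quad\text{and}\quad\frac1n\|X\hat w-Xw^\ast\|_2^2\leqslant\frac{36c(J)^2\lambda^2}{\kappa\rho(J)^2}.$$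
   Context: Lovász extension of a set-function $G$ on a finite set $W$: for $w\in\mathbb{R}_+^W$ with $w_{j_1}\geqslant\cdots\geqslant w_{j_m}\geqslant0$, it is $\sum_k w_{j_k}[G(\{j_1,\dots,j_k\})-G(\{j_1,\dots,j_{k-1}\})]$. A set $A\subset V$ is stable if every strict superset $B\supsetneq A$ has $F(B)>F(A)$ (stable sets are closed under intersection; $V$ is stable). For $K\subset V$: $\Omega_K(u)=f_K(|u|)$ on $\mathbb{R}^K$ with $f_K$ the Lovász extension of $F_K(A)=F(A)$, $A\subset K$; $\Omega^K(v)=f^K(|v|)$ on $\mathbb{R}^{K^c}$ with $f^K$ the Lovász extension of $F^K(A)=F(A\cup K)-F(K)$, $A\subset K^c$. $\Omega^\ast(s)=\max_{\Omega(w)\leqslant1}s^\top w$ is the dual norm. $\rho(J)=\min_{\varnothing\neq B\subset J^c}\frac{F(B\cup J)-F(J)}{F(B)}$ and $c(J)=\sup_{w_J\neq0}\Omega_J(w_J)/\|w_J\|_2$. *)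

From HB Require Import structures.
From mathcomp Require Import all_boot all_order all_algebra.
From mathcomp Require Import all_classical all_reals all_analysis.
Set Implicit Arguments.
Unset Strict Implicit.
Unset Printing Implicit Defensive.
Import Order.TTheory GRing.Theory Num.Theory.
Local Open Scope ring_scope.

Section Defs.
Variables (R : realType) (p : nat).

(* Lovász extension of G, restricted to the ground set D : {set 'I_p},
   evaluated at (the D-coordinates of) a nonnegative weight vector w:
   order the elements of D as j_1, ..., j_m with w_{j_1} >= ... >= w_{j_m}
   and return sum_k w_{j_k} [G({j_1..j_k}) - G({j_1..j_{k-1}})]. *)
Definition lovasz (D : {set 'I_p}) (G : {set 'I_p} -> R) (w : 'I_p -> R) : R :=
  let s := sort (fun i j => w j <= w i) (enum D) in
  \sum_(i <- s) w i * (G [set x in take (index i s).+1 s]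
                        - G [set x in take (index i s) s]).

Definition absv (w : 'cV[R]_p) : 'I_p -> R := fun i => `|w i 0|.

Definition Omega (F : {set 'I_p} -> R) (w : 'cV[R]_p) : R :=
  lovasz [set: 'I_p] F (absv w).

Definition Omega_low (F : {set 'I_p} -> R) (K : {set 'I_p}) (w : 'cV[R]_p) : R :=
  lovasz K F (absv w).

Definition Omega_up (F : {set 'I_p} -> R) (K : {set 'I_p}) (w : 'cV[R]_p) : R :=
  lovasz (~: K) (fun A => F (A :|: K) - F K) (absv w).

Definition Omega_dual (F : {set 'I_p} -> R) (s : 'cV[R]_p) : R :=
  sup [set (s^T *m w) 0 0 | w in [set w : 'cV[R]_p | Omega F w <= 1]]%classic.

(* rho(J) = min_{ {} <> B ⊂ J^c } (F(B ∪ J) - F(J)) / F(B)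
   (each term is <= 1 by submodularity; the neutral element 1 only matters
   when J = V, where the min is over the empty family) *)
Definition rho (F : {set 'I_p} -> R) (J : {set 'I_p}) : R :=
  \big[Order.min/1]_(B : {set 'I_p} | (0 < #|B|)%N && (B \subset ~: J))
     ((F (B :|: J) - F J) / F B).

Definition cJ (F : {set 'I_p} -> R) (J : {set 'I_p}) : R :=
  sup [set Omega_low F J w / Num.sqrt (\sum_(i in J) w i 0 ^+ 2)
      | w in [set w : 'cV[R]_p | exists i, i \in J /\ w i 0 != 0]]%classic.

Definition submodular (F : {set 'I_p} -> R) :=
  forall A B : {set 'I_p}, F (A :|: B) + F (A :&: B) <= F A + F B.

Definition nondecreasing_setfun (F : {set 'I_p} -> R) :=
  forall A B : {set 'I_p}, A \subset B -> F A <= F B.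

Definition stable (F : {set 'I_p} -> R) (A : {set 'I_p}) :=
  forall B : {set 'I_p}, A \proper B -> F A < F B.

Definition supp (w : 'cV[R]_p) : {set 'I_p} := [set i | w i 0 != 0].

End Defs.

Definition std_normal_vec {R : realType} {d : measure_display}
    {T : measurableType d} (P : probability T R) (n : nat)
    (eps : T -> 'cV[R]_n) : Prop :=
  (forall i, measurable_fun [set: T]%classic (fun t => eps t i 0)) /\
  (forall B : 'I_n -> set R, (forall i, measurable (B i)) ->
     P [set t | forall i, B i (eps t i 0)]%classic =
       (\prod_(i < n) normal_prob 0 1 (B i))%E).

From HB Require Import structures.
From mathcomp Require Import all_boot all_order all_algebra.
From mathcomp Require Import all_classical all_reals all_analysis.
From mathcomp Require Import measurable_realfun lra ring.
Set Implicit Arguments.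
Unset Strict Implicit.
Unset Printing Implicit Defensive.
Import Order.TTheory GRing.Theory Num.Theory.
Local Open Scope ring_scope.

(* On the event [Omega^*(z) <= lambda rho(J) sqrt n / (2 sigma)] everything is
   deterministic.  Comparing the objective at [what] and [wstar] and bounding the
   noise term [sigma/n <eps, X Delta> = sigma/sqrt n <z, Delta>] by
   [Omega^*(z) Omega(Delta)] gives, for [Delta = what - wstar],
   [||X Delta||^2/n <= lambda rho Omega(Delta) + 2 lambda (Omega(wstar) - Omega(what))].
   Submodularity splits the Lovász extension, [Omega_J + Omega^J <= Omega], and the
   definition of [rho] gives [rho Omega <= rho Omega_J + Omega^J]; as [wstar] is
   supported in [J] this yields [||X Delta||^2/n <= lambda (3 Omega_J(Delta) - Omega^J(Delta))].
   So [Delta] lies in the cone of the restricted eigenvalue condition, and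
   [kappa ||Delta_J||^2 <= ||X Delta||^2/n <= 3 lambda c(J) ||Delta_J||] gives both bounds.
   Every inequality on the norms comes from Edmonds' greedy lemma: the Lovász extension
   dominates [w . t] for [t] in the submodular polyhedron, with equality at the greedy
   vector. *)

Section LovaszExtension.
Variables (R : realType) (p : nat).
Implicit Types (G : {set 'I_p} -> R) (s : seq 'I_p) (A D : {set 'I_p}).

Definition greedy_gain G s i :=
  G [set x in take (index i s).+1 s] - G [set x in take (index i s) s].

Lemma greedy_gain_rcons G s x i : i \in s -> greedy_gain G (rcons s x) i = greedy_gain G s i.
Proof.
move=> i_s; rewrite /greedy_gain -cats1 index_cat i_s.
by rewrite -index_mem in i_s; rewrite !takel_cat // ltnW.
Qed.

Lemma greedy_gain_rcons_last G s x : x \notin s ->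
  greedy_gain G (rcons s x) x = G [set y in rcons s x] - G [set y in s].
Proof.
move=> x_s; rewrite /greedy_gain -cats1 index_cat (negbTE x_s) /= eqxx addn0.
rewrite (take_size_cat _ (erefl (size s))) take_oversize //.
by rewrite size_cat /= addn1.
Qed.

Lemma sum_greedy_gain G s : G finset.set0 = 0 -> uniq s ->
  \sum_(i <- s) greedy_gain G s i = G [set x in s].
Proof.
move=> G0; elim/last_ind: s => [|s x IH].
  by move=> _; rewrite big_nil -G0; congr G; apply/setP => y; rewrite !inE.
rewrite rcons_uniq => /andP[x_s s_uniq]; rewrite -cats1 big_cat big_seq1 /= cats1.
rewrite (eq_big_seq (greedy_gain G s)) => [|i i_s]; last exact: greedy_gain_rcons.
by rewrite IH // greedy_gain_rcons_last // addrC subrK.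
Qed.

Lemma greedy_gain_sum_le G s A : submodular G -> G finset.set0 = 0 -> uniq s ->
  A \subset [set x in s] -> \sum_(i in A) greedy_gain G s i <= G A.
Proof.
move=> smG G0; elim/last_ind: s A => [|s x IH] A.
  by move=> _; rewrite finset.subset0 => /eqP ->; rewrite big_set0 G0.
rewrite rcons_uniq => /andP[x_s s_uniq] sA.
have sAx : A :\ x \subset [set y in s].
  apply/fintype.subsetP => i; rewrite !inE => /andP[ix iA].
  by have := fintype.subsetP sA i iA; rewrite inE mem_rcons inE (negbTE ix).
have gainE i : i \in A :\ x -> greedy_gain G (rcons s x) i = greedy_gain G s i.
  by move=> iAx; apply: greedy_gain_rcons; have := fintype.subsetP sAx i iAx; rewrite inE.
case: (boolP (x \in A)) => xA; last first.
  have -> : A = A :\ x.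
    by apply/setP => i; rewrite !inE; case: eqP => // ->; rewrite (negbTE xA).
  by rewrite (eq_bigr _ gainE) IH.
rewrite (big_setD1 x) //= greedy_gain_rcons_last // (eq_bigr _ gainE).
have AUs : A :|: [set y in s] = [set y in rcons s x].
  apply/setP => y; rewrite !inE mem_rcons inE.
  apply/orP/orP => [[yA|ys]|[/eqP->|ys]]; [|by right|by left|by right].
  by have := fintype.subsetP sA y yA; rewrite inE mem_rcons inE => /orP.
have AIs : A :&: [set y in s] = A :\ x.
  apply/setP => y; rewrite !inE; case: (eqVneq y x) => [->|yx] /=.
    by rewrite (negbTE x_s) andbF.
  apply/andP/idP => [[]//|yA].
  by have := fintype.subsetP sA y yA; rewrite inE mem_rcons inE (negbTE yx).
have := smG A [set y in s]; have := IH _ s_uniq sAx; rewrite AUs AIs; lra.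
Qed.

(* Abel summation: subtract the smallest weight [w x] and induct. *)
Lemma weighted_sum_le_greedy G s (w t : 'I_p -> R) : G finset.set0 = 0 -> uniq s ->
  {in s &, forall i j, (index i s <= index j s)%N -> w j <= w i} ->
  {in s, forall i, 0 <= w i} ->
  (forall A, A \subset [set x in s] -> \sum_(i in A) t i <= G A) ->
  \sum_(i <- s) w i * t i <= \sum_(i <- s) w i * greedy_gain G s i.
Proof.
move=> G0; elim/last_ind: s w => [|s x IH] w; first by rewrite !big_nil.
move=> sx_uniq; move: (sx_uniq); rewrite rcons_uniq => /andP[x_s s_uniq].
move=> w_sorted w_ge0 t_poly.
have s_sub i : i \in s -> i \in rcons s x by rewrite mem_rcons inE => ->; rewrite orbT.
have x_in : x \in rcons s x by rewrite mem_rcons inE eqxx.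
have index_s i : i \in s -> index i (rcons s x) = index i s.
  by move=> i_s; rewrite -cats1 index_cat i_s.
have wx_le i : i \in s -> w x <= w i.
  move=> i_s; apply: w_sorted; [exact: s_sub|exact: x_in|].
  rewrite index_s // -cats1 index_cat (negbTE x_s) /= eqxx addn0.
  by rewrite ltnW // index_mem.
pose w' i := w i - w x.
have IHw' : \sum_(i <- s) w' i * t i <= \sum_(i <- s) w' i * greedy_gain G s i.
  apply: IH => // [i j i_s j_s ij|i i_s|A sA].
  - by rewrite lerD2r; apply: w_sorted; rewrite ?s_sub // !index_s.
  - by rewrite subr_ge0 wx_le.
  - apply: t_poly; apply: fintype.subset_trans sA _.
    by apply/fintype.subsetP => i; rewrite !inE; exact: s_sub.
have t_total : \sum_(i <- s) t i + t x <= G [set y in rcons s x].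
  have := t_poly _ (subxx _).
  rewrite (eq_bigl (mem (rcons s x))) => [|i]; last by rewrite inE.
  by rewrite -big_uniq // -cats1 big_cat big_seq1.
have split_wx (u : 'I_p -> R) :
    \sum_(i <- s) w i * u i = \sum_(i <- s) w' i * u i + w x * \sum_(i <- s) u i.
  by rewrite mulr_sumr -big_split /=; apply: eq_bigr => i _; rewrite /w'; ring.
have gain_s : \sum_(i <- s) w i * greedy_gain G (rcons s x) i =
              \sum_(i <- s) w i * greedy_gain G s i.
  by apply: eq_big_seq => i i_s; rewrite greedy_gain_rcons.
rewrite -cats1 !big_cat !big_seq1 /= cats1 gain_s greedy_gain_rcons_last //.
rewrite !split_wx sum_greedy_gain //.
have := ler_wpM2l (w_ge0 x x_in) t_total; lra.
Qed.

Definition lovasz_order D (w : 'I_p -> R) := sort (fun i j => w j <= w i) (enum D).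

Lemma lovasz_order_uniq D w : uniq (lovasz_order D w).
Proof. by rewrite sort_uniq enum_uniq. Qed.

Lemma mem_lovasz_order D w i : (i \in lovasz_order D w) = (i \in D).
Proof. by rewrite mem_sort mem_enum. Qed.

Lemma set_lovasz_order D w : [set x in lovasz_order D w] = D.
Proof. by apply/setP => i; rewrite inE mem_lovasz_order. Qed.

Lemma lovasz_order_sorted D w : {in lovasz_order D w &, forall i j,
  (index i (lovasz_order D w) <= index j (lovasz_order D w))%N -> w j <= w i}.
Proof.
apply: (@sorted_leq_index _ (fun i j => w j <= w i)).
- by move=> a b c /[swap]; exact: le_trans.
- by move=> a; exact: lexx.
- by apply: sort_sorted => a b; exact: le_total.
Qed.

Lemma sum_lovasz_order D w (u : 'I_p -> R) :
  \sum_(i <- lovasz_order D w) u i = \sum_(i in D) u i.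
Proof.
rewrite big_uniq ?lovasz_order_uniq //; apply: eq_bigl => i.
by rewrite mem_lovasz_order.
Qed.

Lemma lovaszE D G w :
  lovasz D G w = \sum_(i in D) w i * greedy_gain G (lovasz_order D w) i.
Proof. by rewrite -(sum_lovasz_order D w). Qed.

Lemma lovasz_gain_sum_le D G w A : submodular G -> G finset.set0 = 0 -> A \subset D ->
  \sum_(i in A) greedy_gain G (lovasz_order D w) i <= G A.
Proof.
move=> smG G0 sAD; apply: greedy_gain_sum_le => //; first exact: lovasz_order_uniq.
by rewrite set_lovasz_order.
Qed.

Lemma le_lovasz_sum D G (w t : 'I_p -> R) : G finset.set0 = 0 ->
  {in D, forall i, 0 <= w i} ->
  (forall A, A \subset D -> \sum_(i in A) t i <= G A) ->
  \sum_(i in D) w i * t i <= lovasz D G w.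
Proof.
move=> G0 w_ge0 t_poly; rewrite lovaszE -!(sum_lovasz_order D w).
apply: weighted_sum_le_greedy => //.
- exact: lovasz_order_uniq.
- exact: lovasz_order_sorted.
- by move=> i; rewrite mem_lovasz_order; exact: w_ge0.
- by rewrite set_lovasz_order.
Qed.

Lemma greedy_gain_ge0 G s i : nondecreasing_setfun G -> 0 <= greedy_gain G s i.
Proof.
move=> mG; rewrite subr_ge0; apply: mG; apply/fintype.subsetP => j; rewrite !inE.
by move=> j_in; move: (j_in); rewrite !in_take ?(mem_take j_in) // => /ltnW.
Qed.

Lemma lovaszZ D G c w : lovasz D (fun A => c * G A) w = c * lovasz D G w.
Proof. by rewrite !lovaszE mulr_sumr; apply: eq_bigr => i _; rewrite /greedy_gain; ring. Qed.

Section SubmodularLovasz.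
Variables (D : {set 'I_p}) (G : {set 'I_p} -> R).
Hypotheses (smG : submodular G) (G0 : G finset.set0 = 0) (mG : nondecreasing_setfun G).

Lemma lovasz_ge0 w : {in D, forall i, 0 <= w i} -> 0 <= lovasz D G w.
Proof.
by move=> w_ge0; rewrite lovaszE; apply: sumr_ge0 => i iD; rewrite mulr_ge0 ?w_ge0 ?greedy_gain_ge0.
Qed.

Lemma le_lovasz u v : {in D, forall i, 0 <= u i} -> {in D, forall i, u i <= v i} ->
  lovasz D G u <= lovasz D G v.
Proof.
move=> u_ge0 uv; rewrite lovaszE.
have v_ge0 : {in D, forall i, 0 <= v i}.
  by move=> i iD; apply: le_trans (u_ge0 i iD) (uv i iD).
apply: le_trans (le_lovasz_sum G0 v_ge0 (fun A => lovasz_gain_sum_le u smG G0)).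
by apply: ler_sum => i iD; rewrite ler_wpM2r ?greedy_gain_ge0 ?uv.
Qed.

Lemma eq_lovasz u v : {in D, forall i, 0 <= u i} -> {in D, u =1 v} ->
  lovasz D G u = lovasz D G v.
Proof.
move=> u_ge0 uv; apply/le_anti/andP; split; apply: le_lovasz => // i iD;
  by rewrite ?uv // -uv ?u_ge0.
Qed.

Lemma lovaszD_le u v : {in D, forall i, 0 <= u i} -> {in D, forall i, 0 <= v i} ->
  lovasz D G (fun i => u i + v i) <= lovasz D G u + lovasz D G v.
Proof.
move=> u_ge0 v_ge0; rewrite lovaszE; under eq_bigr do rewrite mulrDl.
by rewrite big_split; apply: lerD; apply: le_lovasz_sum => // A; apply: lovasz_gain_sum_le.
Qed.

Lemma lovasz_eq0 w : {in D, forall i, w i = 0} -> lovasz D G w = 0.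
Proof. by move=> w0; rewrite lovaszE big1 // => i iD; rewrite w0 // mul0r. Qed.

End SubmodularLovasz.

End LovaszExtension.

Definition contraction (R : realType) (p : nat) (F : {set 'I_p} -> R) (J A : {set 'I_p}) :=
  F (A :|: J) - F J.

Section NormDecomposition.
Variables (R : realType) (p : nat) (F : {set 'I_p} -> R) (J : {set 'I_p}).
Hypotheses (smF : submodular F) (F0 : F finset.set0 = 0)
  (mF : nondecreasing_setfun F) (F1_gt0 : forall k, 0 < F [set k]).
Implicit Types (u v w : 'cV[R]_p) (A B : {set 'I_p}).

Lemma submodular_contraction : submodular (contraction F J).
Proof.
move=> A B; rewrite /contraction.
have := smF (A :|: J) (B :|: J); rewrite -finset.setUUl -finset.setUIl; lra.
Qed.

Lemma contraction0 : contraction F J finset.set0 = 0.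
Proof. by rewrite /contraction finset.set0U subrr. Qed.

Lemma nondecreasing_contraction : nondecreasing_setfun (contraction F J).
Proof. by move=> A B sAB; rewrite /contraction lerD2r mF // finset.setSU. Qed.

Lemma setfun_ge0 A : 0 <= F A.
Proof. by rewrite -F0 mF // finset.sub0set. Qed.

Lemma setfun_gt0 A : A != finset.set0 -> 0 < F A.
Proof.
case/finset.set0Pn => k kA; apply: lt_le_trans (F1_gt0 k) _.
by apply: mF; rewrite finset.sub1set.
Qed.

Lemma absv_ge0 w i : 0 <= absv w i.
Proof. exact: normr_ge0. Qed.

Lemma Omega_ge0 w : 0 <= Omega F w.
Proof. by apply: lovasz_ge0 => // i _; exact: absv_ge0. Qed.

Lemma Omega_low_ge0 w : 0 <= Omega_low F J w.
Proof. by apply: lovasz_ge0 => // i _; exact: absv_ge0. Qed.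

(* Glue the greedy vectors of [F] on [J] and of the contraction on [~: J]:
   the result lies in the submodular polyhedron of [F]. *)
Lemma Omega_low_add_up_le w : Omega_low F J w + Omega_up F J w <= Omega F w.
Proof.
rewrite /Omega_low /Omega_up /Omega (lovaszE J) (lovaszE (~: J)).
pose t i := if i \in J then greedy_gain F (lovasz_order J (absv w)) i
            else greedy_gain (contraction F J) (lovasz_order (~: J) (absv w)) i.
apply: le_trans (le_lovasz_sum F0 (fun i _ => absv_ge0 w i) (t := t) _).
  rewrite [X in _ <= X](big_setID J) /= finset.setTI finset.setTD.
  apply: lerD; apply: ler_sum => i; first by rewrite /t => ->.
  by rewrite inE /t => /negbTE ->.
move=> A _; rewrite (big_setID J) /=.
have tJ : \sum_(i in A :&: J) t i <= F (A :&: J).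
  rewrite (eq_bigr (greedy_gain F (lovasz_order J (absv w)))) => [|i]; last first.
    by rewrite inE /t => /andP[_ ->].
  exact: lovasz_gain_sum_le smF F0 (finset.subsetIr A J).
have tJc : \sum_(i in A :\: J) t i <= contraction F J (A :\: J).
  rewrite (eq_bigr (greedy_gain (contraction F J) (lovasz_order (~: J) (absv w)))).
    apply: lovasz_gain_sum_le submodular_contraction contraction0 _.
    by apply/fintype.subsetP => i; rewrite !inE => /andP[].
  by move=> i; rewrite inE /t => /andP[/negbTE ->].
have AJ : A :\: J :|: J = A :|: J.
  by apply/setP => i; rewrite !inE; case: (i \in J); rewrite ?orbT ?orbF.
have := smF A J; move: tJc; rewrite /contraction AJ; lra.
Qed.

Lemma Omega_up_ge0 w : 0 <= Omega_up F J w.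
Proof.
by apply: lovasz_ge0 => [|i _]; [exact: nondecreasing_contraction|exact: absv_ge0].
Qed.

Lemma eq_Omega_up u v : (forall i, i \notin J -> u i 0 = v i 0) ->
  Omega_up F J u = Omega_up F J v.
Proof.
move=> uv; apply: (eq_lovasz submodular_contraction contraction0 nondecreasing_contraction).
  by move=> i _; exact: absv_ge0.
by move=> i; rewrite inE => iJ; rewrite /absv uv.
Qed.

Lemma Omega_lowD_le u v : Omega_low F J (u + v) <= Omega_low F J u + Omega_low F J v.
Proof.
apply: le_trans (lovaszD_le smF F0 (fun i _ => absv_ge0 u i) (fun i _ => absv_ge0 v i)).
apply: le_lovasz => // i _; first exact: absv_ge0.
by rewrite /absv mxE ler_normD.
Qed.

Lemma Omega_lowN u : Omega_low F J (- u) = Omega_low F J u.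
Proof.
apply: eq_lovasz => // i _; first exact: absv_ge0.
by rewrite /absv mxE normrN.
Qed.

Lemma Omega_le_Omega_low w : (forall i, i \notin J -> w i 0 = 0) ->
  Omega F w <= Omega_low F J w.
Proof.
move=> w0; rewrite /Omega (lovaszE [set: 'I_p]) (big_setID J) /=.
rewrite finset.setTI finset.setTD [X in _ + X]big1 ?addr0 => [|i]; last first.
  by rewrite inE => /w0 wi0; rewrite /absv wi0 normr0 mul0r.
apply: le_lovasz_sum F0 (fun i _ => absv_ge0 w i) _ => A _.
exact: lovasz_gain_sum_le smF F0 (finset.subsetT A).
Qed.

Lemma rho_le A : (0 < #|A|)%N -> A \subset ~: J ->
  rho F J <= contraction F J A / F A.
Proof. by move=> A_gt0 AJ; apply: bigmin_le_cond; rewrite A_gt0 AJ. Qed.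

Lemma rho_mul_le_contraction A : A \subset ~: J -> rho F J * F A <= contraction F J A.
Proof.
move=> AJ; have [->|A0] := eqVneq A finset.set0; first by rewrite F0 mulr0 contraction0.
by rewrite -ler_pdivlMr ?setfun_gt0 // rho_le // card_gt0.
Qed.

Lemma rho_gt0 : stable F J -> 0 < rho F J.
Proof.
move=> stJ; apply: lt_bigmin => // B /andP[]; rewrite card_gt0 => B0 BJ.
rewrite divr_gt0 ?setfun_gt0 // subr_gt0; apply: stJ.
rewrite properE finset.subsetUr /=; apply: contra B0 => BJJ.
rewrite -finset.subset0 -(finset.setICr J) finset.subsetI BJ andbT.
exact: fintype.subset_trans (finset.subsetUl B J) BJJ.
Qed.

Lemma rho_le1 : rho F J <= 1.
Proof. exact: bigmin_le_id. Qed.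

Lemma rho_ge0 : 0 <= rho F J.
Proof.
apply: le_bigmin => // B _.
by rewrite divr_ge0 ?setfun_ge0 // subr_ge0 mF // finset.subsetUr.
Qed.

Lemma rho_Omega_le w :
  rho F J * Omega F w <= rho F J * Omega_low F J w + Omega_up F J w.
Proof.
rewrite /Omega (lovaszE [set: 'I_p]) (big_setID J) /= finset.setTI finset.setTD mulrDr.
set g := greedy_gain F _.
have g_poly A : \sum_(i in A) g i <= F A.
  exact: lovasz_gain_sum_le smF F0 (finset.subsetT A).
apply: lerD.
  by rewrite ler_wpM2l ?rho_ge0 //; apply: le_lovasz_sum F0 _ _ => [i _|A _];
    [exact: absv_ge0|exact: g_poly].
rewrite mulr_sumr (eq_bigr (fun i => absv w i * (rho F J * g i))) => [|i _]; last first.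
  by rewrite mulrCA.
apply: le_lovasz_sum contraction0 (fun i _ => absv_ge0 w i) _ => A AJ.
rewrite -mulr_sumr; apply: le_trans (rho_mul_le_contraction AJ).
by rewrite ler_wpM2l ?rho_ge0.
Qed.

End NormDecomposition.

Lemma col_dotE (R : comRingType) m (s w : 'cV[R]_m) : (s^T *m w) 0 0 = \sum_i s i 0 * w i 0.
Proof. by rewrite mxE; apply: eq_bigr => i _; rewrite mxE. Qed.

Section DualNorm.
Variables (R : realType) (p : nat) (F : {set 'I_p} -> R).
Hypotheses (smF : submodular F) (F0 : F finset.set0 = 0)
  (mF : nondecreasing_setfun F) (F1_gt0 : forall k, 0 < F [set k]).
Implicit Types (s w : 'cV[R]_p) (A : {set 'I_p}).

Definition Omega_dual_max s :=
  \big[Order.max/0]_(A : {set 'I_p}) ((\sum_(i in A) `|s i 0|) / F A).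

Lemma Omega_dual_max_ge0 s : 0 <= Omega_dual_max s.
Proof. exact: bigmax_ge_id. Qed.

Lemma Omega0 : Omega F 0 = 0.
Proof. by apply: lovasz_eq0 => // i _; rewrite /absv mxE normr0. Qed.

(* [|s|] lies in the submodular polyhedron of [Omega_dual_max s * F]. *)
Lemma dot_le_Omega_dual_max s w : (s^T *m w) 0 0 <= Omega_dual_max s * Omega F w.
Proof.
rewrite col_dotE /Omega -lovaszZ.
apply: le_trans (_ : \sum_(i in [set: 'I_p]) absv w i * `|s i 0| <= _).
  rewrite [leRHS](eq_bigl predT) => [|i]; last by rewrite inE.
  by apply: ler_sum => i _; rewrite /absv mulrC -normrM ler_norm.
apply: le_lovasz_sum; first by rewrite F0 mulr0.
  by move=> i _; exact: absv_ge0.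
move=> A _; have [->|A0] := eqVneq A finset.set0; first by rewrite big_set0 F0 mulr0.
rewrite -ler_pdivrMr ?setfun_gt0 //.
by rewrite /Omega_dual_max; apply: le_bigmax.
Qed.

Lemma Omega_dualE s : Omega_dual F s = Omega_dual_max s.
Proof.
rewrite /Omega_dual; set S := (X in sup X).
have S0 : S 0 by exists 0; rewrite /= ?Omega0 // col_dotE big1 // => i _; rewrite mxE mulr0.
have S_le y : S y -> y <= Omega_dual_max s.
  case=> w /= Ow1 <-; apply: le_trans (dot_le_Omega_dual_max s w) _.
  by rewrite -[leRHS]mulr1 ler_wpM2l ?Omega_dual_max_ge0.
apply/le_anti/andP; split; first by apply: ge_sup S_le; exists 0.
have le_sup := ub_le_sup (ex_intro _ _ S_le : has_ubound S).
apply: bigmax_le => [|A _]; first exact: le_sup.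
have [FA0|FA_neq0] := eqVneq (F A) 0; first by rewrite FA0 invr0 mulr0 le_sup.
pose w := \col_i (if i \in A then Num.sg (s i 0) / F A else 0) : 'cV[R]_p.
apply: le_sup; exists w; last first.
  rewrite col_dotE (bigID (mem A)) /= [X in _ + X]big1 ?addr0 => [|i]; last first.
    by rewrite mxE => /negbTE ->; rewrite mulr0.
  rewrite mulr_suml; apply: eq_bigr => i iA.
  by rewrite mxE iA mulrA [_ * Num.sg _]mulrC -normrEsg.
rewrite /= /Omega lovaszE (big_setID A) /= finset.setTI finset.setTD.
rewrite [X in _ + X]big1 ?addr0; last first.
  by move=> i; rewrite !inE /absv mxE => /negbTE ->; rewrite normr0 mul0r.
set g := greedy_gain F _.
apply: le_trans (_ : \sum_(i in A) g i / F A <= _).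
  apply: ler_sum => i iA.
  rewrite /absv mxE iA normrM normfV (ger0_norm (setfun_ge0 F0 mF A)) normr_sg.
  rewrite mulrAC ler_wpM2r ?invr_ge0 ?setfun_ge0 //.
  by rewrite ler_piMl ?greedy_gain_ge0 // lern1 leq_b1.
rewrite -mulr_suml ler_pdivrMr ?mul1r ?lt_def ?FA_neq0 ?setfun_ge0 //.
exact: lovasz_gain_sum_le smF F0 (finset.subsetT A).
Qed.

End DualNorm.

Section RestrictedNormConstant.
Variables (R : realType) (p : nat) (F : {set 'I_p} -> R) (J : {set 'I_p}).
Hypotheses (smF : submodular F) (F0 : F finset.set0 = 0) (mF : nondecreasing_setfun F).
Implicit Types (w : 'cV[R]_p).

Local Notation normJ w := (Num.sqrt (\sum_(i in J) w i 0 ^+ 2)).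

Lemma normJ_ge_abs w i : i \in J -> `|w i 0| <= normJ w.
Proof.
move=> iJ; rewrite -sqrtr_sqr ler_sqrt; last by apply: sumr_ge0 => j _; exact: sqr_ge0.
by rewrite (bigD1 i) //= lerDl sumr_ge0 // => j _; exact: sqr_ge0.
Qed.

Lemma normJ_gt0 w i : i \in J -> w i 0 != 0 -> 0 < normJ w.
Proof. by move=> iJ wi0; apply: lt_le_trans (normJ_ge_abs w iJ); rewrite normr_gt0. Qed.

Lemma Omega_low_le_normJ w : Omega_low F J w <= normJ w * \sum_(i in J) F [set i].
Proof.
rewrite /Omega_low lovaszE mulr_sumr; apply: ler_sum => i iJ.
rewrite ler_pM ?absv_ge0 ?greedy_gain_ge0 ?normJ_ge_abs //.
have := lovasz_gain_sum_le (absv w) smF F0 (_ : [set i] \subset J).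
by rewrite big_set1 finset.sub1set; apply.
Qed.

Lemma Omega_low_le_cJ w : Omega_low F J w <= cJ F J * normJ w.
Proof.
case: (pickP (fun i => (i \in J) && (w i 0 != 0))) => [i /andP[iJ wi0]|wJ0]; last first.
  have w0 i : i \in J -> w i 0 = 0 by move=> iJ; have := wJ0 i; rewrite iJ /= => /negbFE/eqP.
  rewrite /Omega_low lovasz_eq0 => [|i iJ]; last by rewrite /absv w0 // normr0.
  by rewrite big1 ?sqrtr0 ?mulr0 // => i iJ; rewrite w0 // expr0n.
rewrite -ler_pdivrMr ?(normJ_gt0 iJ wi0) //; apply: ub_le_sup; last by exists w => //; exists i.
exists (\sum_(i in J) F [set i]) => _ [v [k [kJ vk0]] <-].
by rewrite ler_pdivrMr ?(normJ_gt0 kJ vk0) // mulrC Omega_low_le_normJ.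
Qed.

End RestrictedNormConstant.

(* Read [A = Omega_J(Delta)], [s = ||Delta_J||_2], [S = ||X Delta||^2 / n]. *)
Lemma quadratic_growth_bounds (R : realFieldType) (lambda kappa c s A S : R) :
  0 < lambda -> 0 < kappa -> 0 <= s -> A <= c * s ->
  kappa * s ^+ 2 <= S -> S <= 3 * lambda * A ->
  S * kappa <= 9 * lambda ^+ 2 * c ^+ 2 /\ A * kappa <= 3 * lambda * c ^+ 2.
Proof.
move=> lambda_gt0 kappa_gt0 s_ge0 Acs ks S3.
have Scs : S <= 3 * lambda * c * s by apply: le_trans S3 _; nra.
have lc_ge0 : 0 <= lambda * c ^+ 2 by rewrite mulr_ge0 ?sqr_ge0 // ltW.
have [s_eq0|sn0] := eqVneq s 0.
  rewrite s_eq0 mulr0 in Scs Acs; split; nra.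
have s_gt0 : 0 < s by rewrite lt_def sn0 s_ge0.
have ksc : kappa * s <= 3 * lambda * c by rewrite -(ler_pM2r s_gt0); nra.
have c_ge0 : 0 <= c by nra.
split; nra.
Qed.

Lemma quad_formE (R : comRingType) n p (X : 'M[R]_(n, p)) (D : 'cV[R]_p) a :
  (D^T *m (a *: (X^T *m X)) *m D) 0 0 = a * \sum_i (X *m D) i 0 ^+ 2.
Proof.
rewrite -scalemxAr -scalemxAl mxE; congr (_ * _).
rewrite !mulmxA -[D^T *m X^T]trmx_mul -mulmxA col_dotE.
by apply: eq_bigr => i _; rewrite expr2.
Qed.

Lemma cross_termE (R : comRingType) n p (X : 'M[R]_(n, p)) (e : 'cV[R]_n) (D : 'cV[R]_p) :
  ((X^T *m e)^T *m D) 0 0 = \sum_i e i 0 * (X *m D) i 0.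
Proof. by rewrite trmx_mul trmxK -mulmxA col_dotE. Qed.

Section Estimation.
Variables (R : realType) (p n : nat) (F : {set 'I_p} -> R) (J : {set 'I_p}).
Variables (X : 'M[R]_(n, p)) (wstar : 'cV[R]_p) (sigma lambda kappa : R).
Hypotheses (n_gt0 : (0 < n)%N) (sigma_gt0 : 0 < sigma) (lambda_gt0 : 0 < lambda).
Hypotheses (smF : submodular F) (mF : nondecreasing_setfun F) (F0 : F finset.set0 = 0)
  (F1_gt0 : forall k, 0 < F [set k]).
Hypotheses (stJ : stable F J) (suppJ : supp wstar \subset J) (kappa_gt0 : 0 < kappa).
Hypothesis restricted_eigenvalue : forall Delta : 'cV[R]_p,
  Omega_up F J Delta <= 3 * Omega_low F J Delta ->
  (Delta^T *m ((n%:R)^-1 *: (X^T *m X)) *m Delta) 0 0 >= kappa * \sum_(i in J) Delta i 0 ^+ 2.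

Definition penalized_loss (y : 'cV[R]_n) (w : 'cV[R]_p) :=
  (2 * n%:R)^-1 * \sum_i (y - X *m w) i 0 ^+ 2 + lambda * Omega F w.

Lemma basic_inequality (e : 'cV[R]_n) (w : 'cV[R]_p) :
  penalized_loss (X *m wstar + sigma *: e) w
    <= penalized_loss (X *m wstar + sigma *: e) wstar ->
  (n%:R)^-1 * \sum_i (X *m (w - wstar)) i 0 ^+ 2 <=
  2 * sigma / n%:R * \sum_i e i 0 * (X *m (w - wstar)) i 0
  + 2 * lambda * (Omega F wstar - Omega F w).
Proof.
set v := X *m (w - wstar).
have expand : \sum_i (X *m wstar + sigma *: e - X *m w) i 0 ^+ 2 =
    \sum_i (X *m wstar + sigma *: e - X *m wstar) i 0 ^+ 2
    - 2 * sigma * \sum_i e i 0 * v i 0 + \sum_i v i 0 ^+ 2.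
  rewrite !mulr_sumr -sumrB -big_split /=; apply: eq_bigr => i _.
  rewrite /v mulmxBr !mxE; ring.
rewrite /penalized_loss expand invfM; lra.
Qed.

Lemma noise_term_le (e : 'cV[R]_n) (D : 'cV[R]_p) :
  Omega_dual F ((Num.sqrt n%:R)^-1 *: (X^T *m e))
    <= lambda * rho F J * Num.sqrt n%:R / (2 * sigma) ->
  2 * sigma / n%:R * \sum_i e i 0 * (X *m D) i 0 <= lambda * rho F J * Omega F D.
Proof.
set z := _ *: _; set sn := Num.sqrt _; set c := _ / _ => z_le.
have sn_gt0 : 0 < sn by rewrite sqrtr_gt0 ltr0n.
have sn2 : sn ^+ 2 = n%:R by rewrite sqr_sqrtr // ler0n.
have -> : \sum_i e i 0 * (X *m D) i 0 = sn * (z^T *m D) 0 0.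
  by rewrite /z linearZ -scalemxAl mxE cross_termE mulrA mulfV ?gt_eqF ?mul1r.
have zD_le : (z^T *m D) 0 0 <= c * Omega F D.
  apply: le_trans (dot_le_Omega_dual_max F0 mF F1_gt0 z D) _.
  by rewrite -Omega_dualE // ler_wpM2r ?(Omega_ge0 mF).
have coef_ge0 : 0 <= 2 * sigma / n%:R by rewrite divr_ge0 ?ler0n // mulr_ge0 // ltW.
rewrite [leRHS](_ : _ = 2 * sigma / n%:R * (sn * (c * Omega F D))).
  by rewrite ler_wpM2l // ler_wpM2l // ltW.
by rewrite /c -sn2; field; rewrite ?gt_eqF.
Qed.

Lemma Omega_sub_le w :
  Omega F wstar - Omega F w <= Omega_low F J (w - wstar) - Omega_up F J (w - wstar).
Proof.
have wstar0 i : i \notin J -> wstar i 0 = 0.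
  by move=> iJ; apply/eqP; apply: contraNT iJ => wi; apply: (fintype.subsetP suppJ); rewrite inE.
have wstar_le := Omega_le_Omega_low smF F0 wstar0.
have low_le : Omega_low F J wstar <= Omega_low F J w + Omega_low F J (w - wstar).
  have := Omega_lowD_le J smF F0 mF w (- (w - wstar)).
  by rewrite (Omega_lowN J smF F0 mF) opprB addrC subrK.
have up_eq : Omega_up F J w = Omega_up F J (w - wstar).
  by apply: eq_Omega_up => // i iJ; rewrite !mxE wstar0 // subr0.
have := Omega_low_add_up_le J smF F0 w; lra.
Qed.

Lemma excess_risk_le (e : 'cV[R]_n) (w : 'cV[R]_p) :
  penalized_loss (X *m wstar + sigma *: e) w
    <= penalized_loss (X *m wstar + sigma *: e) wstar ->
  Omega_dual F ((Num.sqrt n%:R)^-1 *: (X^T *m e))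
    <= lambda * rho F J * Num.sqrt n%:R / (2 * sigma) ->
  (n%:R)^-1 * \sum_i (X *m (w - wstar)) i 0 ^+ 2
    <= lambda * (3 * Omega_low F J (w - wstar) - Omega_up F J (w - wstar)).
Proof.
move=> /basic_inequality basic /(noise_term_le (w - wstar)) noise.
set A := Omega_low F J _; set B := Omega_up F J _.
have rho_le : rho F J * Omega F (w - wstar) <= A + B.
  apply: le_trans (rho_Omega_le J smF F0 mF F1_gt0 (w - wstar)) _.
  by rewrite lerD2r ler_piMl ?rho_le1 // Omega_low_ge0.
have := ler_wpM2l (ltW lambda_gt0) rho_le.
have := ler_wpM2l (ltW lambda_gt0) (Omega_sub_le w); rewrite -/A -/B.
lra.
Qed.

Lemma estimation_error_bounds (e : 'cV[R]_n) (w : 'cV[R]_p) :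
  penalized_loss (X *m wstar + sigma *: e) w
    <= penalized_loss (X *m wstar + sigma *: e) wstar ->
  Omega_dual F ((Num.sqrt n%:R)^-1 *: (X^T *m e))
    <= lambda * rho F J * Num.sqrt n%:R / (2 * sigma) ->
  Omega F (w - wstar) <= 24 * cJ F J ^+ 2 * lambda / (kappa * rho F J ^+ 2) /\
  (n%:R)^-1 * \sum_i (X *m w - X *m wstar) i 0 ^+ 2
    <= 36 * cJ F J ^+ 2 * lambda ^+ 2 / (kappa * rho F J ^+ 2).
Proof.
move=> opt noise; have := excess_risk_le opt noise; rewrite -mulmxBr.
set D := w - wstar; set A := Omega_low F J D; set B := Omega_up F J D.
set S := _ * \sum_i _ => S_le.
have S_ge0 : 0 <= S by rewrite mulr_ge0 ?invr_ge0 ?ler0n ?sumr_ge0 // => i _; rewrite sqr_ge0.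
have cone : B <= 3 * A by rewrite -subr_ge0 -(pmulr_rge0 _ lambda_gt0) (le_trans S_ge0).
have := restricted_eigenvalue cone; rewrite quad_formE -/S.
rewrite -[\sum_(i in J) _]sqr_sqrtr ?sumr_ge0 // => [RE|i _]; last exact: sqr_ge0.
have S_le3 : S <= 3 * lambda * A.
  apply: le_trans S_le _; rewrite [leRHS](_ : _ = lambda * (3 * A)); last by ring.
  by apply: ler_wpM2l; [exact: ltW | rewrite gerBl; exact: Omega_up_ge0].
have [] := quadratic_growth_bounds lambda_gt0 kappa_gt0 (sqrtr_ge0 _)
  (Omega_low_le_cJ J smF F0 mF D) RE S_le3.
rewrite -/A => S_bound A_bound.
set r := rho F J.
have r_gt0 : 0 < r := rho_gt0 mF F1_gt0 stJ.
have r_le1 : r <= 1 := rho_le1 F J.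
have lc_ge0 : 0 <= lambda * cJ F J ^+ 2 by rewrite mulr_ge0 ?sqr_ge0 // ltW.
have Akappa_ge0 : 0 <= A * kappa by rewrite mulr_ge0 ?Omega_low_ge0 // ltW.
have rOmega_le : r * Omega F D <= 4 * A.
  have := rho_Omega_le J smF F0 mF F1_gt0 D; rewrite -/A -/B -/r.
  have : r * A <= A by rewrite ler_piMl ?Omega_low_ge0.
  lra.
split; rewrite ler_pdivlMr ?mulr_gt0 ?exprn_gt0 //.
  have := ler_wpM2r (mulr_ge0 (ltW kappa_gt0) (ltW r_gt0)) rOmega_le.
  have := ler_wpM2l (mulr_ge0 (ler0n _ 4) Akappa_ge0) r_le1.
  rewrite -[r ^+ 2]/(r * r); lra.
have := ler_wpM2l (mulr_ge0 S_ge0 (ltW kappa_gt0)) (exprn_ile1 2 (ltW r_gt0) r_le1).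
have : 0 <= lambda ^+ 2 * cJ F J ^+ 2 by rewrite mulr_ge0 ?sqr_ge0.
lra.
Qed.

End Estimation.

Section Measurability.
Variables (d : measure_display) (T : measurableType d) (R : realType).

Lemma measurable_fun_mulmx_coord m k (M : 'M[R]_(m, k)) (f : T -> 'cV[R]_k) :
  (forall j, measurable_fun [set: T]%classic (fun t => f t j 0)) ->
  forall i, measurable_fun [set: T]%classic (fun t => (M *m f t) i 0).
Proof.
move=> f_meas i; under eq_fun do rewrite mxE.
by apply: measurable_sum => j; apply: measurable_funM; [exact: measurable_cst|exact: f_meas].
Qed.

Lemma measurable_fun_Omega_dual_max p (F : {set 'I_p} -> R) (f : T -> 'cV[R]_p) :
  (forall i, measurable_fun [set: T]%classic (fun t => f t i 0)) ->
  measurable_fun [set: T]%classic (fun t => Omega_dual_max F (f t)).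
Proof.
move=> f_meas; rewrite /Omega_dual_max; elim: (index_enum _) => [|A r IH].
  by under eq_fun do rewrite big_nil; exact: measurable_cst.
under eq_fun do rewrite big_cons; apply: measurable_maxr => //.
apply: measurable_funM; last exact: measurable_cst.
under eq_fun do rewrite big_mkcond /=.
apply: measurable_sum => i; case: (i \in A); last exact: measurable_cst.
exact: measurableT_comp (@normr_measurable _ _) (f_meas i).
Qed.

Lemma probability_setC_ge (P : probability T R) (E : set T) :
  measurable E -> (1 - P (~` E)%classic <= P E)%E.
Proof.
move=> mE; rewrite probability_setC //.
move: (measure_ge0 P E) (probability_le1 P mE).
by case: (P E) => [x| |] //=; rewrite -!EFinB !lee_fin => *; lra.
Qed.

End Measurability.

Theorem proposition7 (R : realType) (p n : nat) (F : {set 'I_p} -> R)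
  (d : measure_display) (T : measurableType d) (P : probability T R)
  (X : 'M[R]_(n, p)) (wstar : 'cV[R]_p) (sigma lambda kappa : R)
  (eps : T -> 'cV[R]_n) (J : {set 'I_p}) (what : T -> 'cV[R]_p) :
  (0 < n)%N ->
  submodular F -> nondecreasing_setfun F -> F finset.set0 = 0 ->
  (forall k : 'I_p, 0 < F [set k]) ->
  0 < sigma ->
  std_normal_vec P eps ->
  (* J = smallest stable set containing Supp(wstar) *)
  stable F J -> supp wstar \subset J ->
  (forall A, stable F A -> supp wstar \subset A -> J \subset A) ->
  0 < kappa ->
  (forall Delta : 'cV[R]_p,
     Omega_up F J Delta <= 3 * Omega_low F J Delta ->
     (Delta^T *m ((n%:R)^-1 *: (X^T *m X)) *m Delta) 0 0
       >= kappa * \sum_(i in J) Delta i 0 ^+ 2) ->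
  0 < lambda ->
  (* what t minimizes (1/2n) ||y - X w||^2 + lambda Omega(w), y = X wstar + sigma eps *)
  (forall t (w : 'cV[R]_p),
     let y := X *m wstar + sigma *: eps t in
     (2 * n%:R)^-1 * \sum_i (y - X *m what t) i 0 ^+ 2 + lambda * Omega F (what t)
     <= (2 * n%:R)^-1 * \sum_i (y - X *m w) i 0 ^+ 2 + lambda * Omega F w) ->
  (* z = X^T eps / sqrt n, a centered normal vector with covariance Q *)
  let z := fun t => (Num.sqrt (n%:R))^-1 *: (X^T *m eps t) in
  exists E : set T, measurable E /\
    (1 - P [set t | (lambda * rho F J * Num.sqrt (n%:R) / (2 * sigma)
                      < Omega_dual F (z t))%R]%classic <= P E)%E /\
    (forall t, E t ->
       Omega F (what t - wstar)
         <= 24 * cJ F J ^+ 2 * lambda / (kappa * rho F J ^+ 2) /\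
       (n%:R)^-1 * \sum_i (X *m what t - X *m wstar) i 0 ^+ 2
         <= 36 * cJ F J ^+ 2 * lambda ^+ 2 / (kappa * rho F J ^+ 2)).
Proof.
move=> n_gt0 smF mF F0 F1_gt0 sigma_gt0 [eps_meas _] stJ suppJ _ kappa_gt0 RE lambda_gt0 opt z.
set c := lambda * rho F J * Num.sqrt n%:R / (2 * sigma).
pose E := [set t | Omega_dual F (z t) <= c]%classic.
have mE : measurable E.
  rewrite -(setTI E); apply: measurable_fun_le => //.
  under eq_fun do rewrite Omega_dualE //.
  apply: measurable_fun_Omega_dual_max => i; under eq_fun do rewrite mxE.
  by apply: measurable_funM; [exact: measurable_cst|exact: measurable_fun_mulmx_coord].
exists E; split => //; split.
  have -> : [set t | c < Omega_dual F (z t)]%classic = (~` E)%classic.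
    by apply/seteqP; split => t /=; rewrite ltNge => /negP.
  exact: probability_setC_ge.
move=> t Et.
exact: (estimation_error_bounds n_gt0 sigma_gt0 lambda_gt0 smF mF F0 F1_gt0 stJ suppJ
  kappa_gt0 RE (opt t wstar) Et).
Qed.
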